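(* Let $a<b$, $n\in\mathbb{N}$, and let $X_n=\{x_0,\dots,x_n\}$ with $a=x_0<x_1<\dots<x_n=b$. Let $S=\{s_1,\dots,s_m\}\subset(a,b)$ be such that $s_\ell\in(x_{\alpha_\ell},x_{\alpha_\ell+1})$ for integers $0<\alpha_1<\dots<\alpha_m<n-1$ satisfying $\alpha_\ell+1<\alpha_{\ell+1}$ for $\ell=1,\dots,m-1$. Define the intervals $$I_0=[x_0,x_{\alpha_1}],\qquad I_\ell=[x_{\alpha_\ell+1},x_{\alpha_{\ell+1}}]\ (\ell=1,\dots,m-1),\qquad I_m=[x_{\alpha_m+1},x_n],$$ let $h^{\min}=\min_{\ell=0,\dots,m}|I_\ell|$ (length), and let $$h^{\max}_{X_n}=\max\{\,x_{i+1}-x_i:\ 0\le i\le n-1,\ s_\ell\notin(x_i,x_{i+1})\ \text{for all }\ell=1,\dots,m\,\}.$$ For $r>0$ and $x\in[a,b]$ let $\mathcal{I}_{r,x}$ be the set of closed intervals $I\subset\bigcup_{\ell=0}^m I_\ell$ with $|I|=r$ and $x\in I$, and define $$r_0=\inf\Big\{r\in\mathbb{R}_+:\ r\le h^{\min}\ \text{and}\ \forall x\in\textstyle\bigcup_{\ell=0}^m I_\ell\ \exists I\in\mathcal{I}_{r,x}\ \text{with}\ \mathrm{card}(I\cap X_n)\ge 1\Big\}.$$ If $h^{\min}\ge h^{\max}_{X_n}$, then $r_0$ exists (the set over which the infimum is taken is nonempty) and $r_0\in\mathbb{R}_+$, i.e. $r_0>0$.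
   Context: $\mathbb{R}_+$ denotes the positive reals; $\mathrm{card}$ denotes cardinality and $|I|$ the length of an interval $I$. *)

From HB Require Import structures.
From mathcomp Require Import all_boot all_order all_algebra.
From mathcomp Require Import classical_sets boolp reals.
Set Implicit Arguments. Unset Strict Implicit. Unset Printing Implicit Defensive.
Import Order.TTheory GRing.Theory Num.Theory.
Local Open Scope ring_scope.
Local Open Scope classical_set_scope.

(* Nodes x_0..x_n are [x i] for i <= n; singular points s_1..s_m are [s l]
   for 1 <= l <= m, with s_l in (x_{alpha l}, x_{alpha l + 1}). *)

(* Left / right node index of the interval I_l, 0 <= l <= m:
   I_0 = [x_0, x_{alpha_1}], I_l = [x_{alpha_l+1}, x_{alpha_{l+1}}],
   I_m = [x_{alpha_m+1}, x_n]  (for m = 0, I_0 = [x_0, x_n]). *)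
Definition Ilo (alpha : nat -> nat) (l : nat) : nat :=
  if l == 0%N then 0%N else (alpha l).+1.
Definition Ihi (n m : nat) (alpha : nat -> nat) (l : nat) : nat :=
  if l == m then n else alpha l.+1.

Definition Iunion (R : realType) (x : nat -> R) (n m : nat)
    (alpha : nat -> nat) : set R :=
  [set y | exists l : nat, (l <= m)%N /\
     x (Ilo alpha l) <= y /\ y <= x (Ihi n m alpha l)].

Definition hmin (R : realType) (x : nat -> R) (n m : nat)
    (alpha : nat -> nat) : R :=
  \big[Num.min/ (x (Ihi n m alpha 0) - x (Ilo alpha 0))]_(l < m.+1)
     (x (Ihi n m alpha l) - x (Ilo alpha l)).

Definition hmax (R : realType) (x : nat -> R) (n m : nat)
    (s : nat -> R) : R :=
  \big[Num.max/0]_(i < n |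
      [forall l : 'I_m, ~~ ((x i < s l.+1) && (s l.+1 < x i.+1))])
     (x i.+1 - x i).

Definition r0_set (R : realType) (x : nat -> R) (n m : nat)
    (alpha : nat -> nat) : set R :=
  [set r | 0 < r /\ r <= hmin x n m alpha /\
     forall y, Iunion x n m alpha y ->
       exists c d : R, d - c = r /\
         [set z | c <= z /\ z <= d] `<=` Iunion x n m alpha /\
         (c <= y /\ y <= d) /\
         (0 < #|[set i : 'I_n.+1 | ((c <= x i) && (x i <= d))%R]|)%N].

Definition r0 (R : realType) (x : nat -> R) (n m : nat)
    (alpha : nat -> nat) : R := inf (r0_set x n m alpha).

From HB Require Import structures.
From mathcomp Require Import all_boot all_order all_algebra.
From mathcomp Require Import classical_sets boolp reals.
From mathcomp Require Import lra zify.
Set Implicit Arguments. Unset Strict Implicit. Unset Printing Implicit Defensive.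
Import Order.TTheory GRing.Theory Num.Theory.
Local Open Scope ring_scope.
Local Open Scope classical_set_scope.

(* Every gap between consecutive nodes inside some I_l contains no singular
   point, so it is at most h^max <= h^min.  Hence each y in I_l has a node of
   I_l in [y - h^min, y], and the window of length h^min ending at y, shifted
   right into I_l if needed, contains it: h^min itself is admissible.
   Conversely, the midpoint of [x_0, x_1] lies in I_0 at distance at least
   (x_1 - x_0)/2 from every node, so every admissible r, hence r_0, is at
   least (x_1 - x_0)/2 > 0. *)

Lemma exists_node_near_below (R : realFieldType) (x : nat -> R) (h y : R)
    (p q : nat) :
  0 <= h -> (p <= q)%N -> (forall k, (p <= k < q)%N -> x k.+1 - x k <= h) ->
  x p <= y <= x q -> exists2 j, (p <= j <= q)%N & y - h <= x j <= y.
Proof.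
move=> h_ge0; elim: q => [|q IHq] pq gaps /andP[py yq].
  move: pq py; rewrite leqn0 => /eqP -> py.
  by exists 0%N => //; apply/andP; split; lra.
have [pq1|ltpq] := eqVneq p q.+1.
  rewrite pq1 in py *.
  by exists q.+1; rewrite ?leqnn //; apply/andP; split; lra.
have {}pq : (p <= q)%N by rewrite -ltnS ltn_neqAle ltpq.
have [yxq|xqy] := lerP y (x q).
  have gaps_q k : (p <= k < q)%N -> x k.+1 - x k <= h.
    by move=> /andP[pk kq]; apply: gaps; rewrite pk ltnW.
  have [j /andP[pj jq] yj] := IHq pq gaps_q (introT andP (conj py yxq)).
  by exists j; rewrite // pj ltnW.
have := gaps q; rewrite pq ltnSn => /(_ isT) gap_q.
by exists q; rewrite ?pq ?leqnSn //; apply/andP; split; lra.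
Qed.

Section Intervals.
Variables (R : realType) (n m : nat) (x s : nat -> R) (alpha : nat -> nat).

Lemma gap_le_hmax (k : nat) : (k < n)%N ->
  (forall L, (0 < L <= m)%N -> ~~ (x k < s L < x k.+1)) ->
  x k.+1 - x k <= hmax x n m s.
Proof.
move=> kn no_s; rewrite /hmax.
apply: (le_bigmax_cond _ (fun i : 'I_n => x i.+1 - x i) (j := Ordinal kn)).
by apply/forallP => L; apply: no_s; rewrite /= ltn_ord.
Qed.

Lemma hmin_le (l : nat) : (l <= m)%N ->
  hmin x n m alpha <= x (Ihi n m alpha l) - x (Ilo alpha l).
Proof.
move=> lm; rewrite /hmin.
exact: (bigmin_le _ (Ordinal (lm : (l < m.+1)%N))
  (fun l : 'I_m.+1 => x (Ihi n m alpha l) - x (Ilo alpha l))).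
Qed.

Lemma hmin_gt0 :
  (forall l, (l <= m)%N -> x (Ilo alpha l) < x (Ihi n m alpha l)) ->
  0 < hmin x n m alpha.
Proof.
move=> lt_lo_hi; rewrite /hmin; apply: lt_bigmin; first by rewrite subr_gt0 lt_lo_hi.
by move=> l _; rewrite subr_gt0 lt_lo_hi // -ltnS.
Qed.

Hypothesis n_gt0 : (0 < n)%N.
Hypothesis x_incr : forall i, (i < n)%N -> x i < x i.+1.
Hypothesis alpha1_gt0 : (0 < m)%N -> (0 < alpha 1)%N.
Hypothesis alpham_lt : (0 < m)%N -> (alpha m < n.-1)%N.
Hypothesis alpha_gap :
  forall l, (1 <= l)%N -> (l < m)%N -> ((alpha l).+1 < alpha l.+1)%N.
Hypothesis s_between : forall l, (1 <= l)%N -> (l <= m)%N ->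
  x (alpha l) < s l /\ s l < x (alpha l).+1.

Lemma alpha_le (L L' : nat) :
  (0 < L)%N -> (L <= L' <= m)%N -> (alpha L <= alpha L')%N.
Proof.
move=> L_gt0 /andP[LL' L'm].
apply: (@homo_leq_in nat [pred l | 0 < l <= m]%N alpha leq leqnn leq_trans);
  rewrite ?inE //=; try lia.
- move=> i j; rewrite !inE => /andP[i0 _] /andP[_ jm] k /andP[ik kj].
  by rewrite inE /=; lia.
- move=> l; rewrite !inE => /andP[l0 _] /andP[_ l1m].
  by have := alpha_gap l0 l1m; lia.
Qed.

Lemma Ilo_lt_Ihi (l : nat) : (l <= m)%N -> (Ilo alpha l < Ihi n m alpha l)%N.
Proof.
move=> lm; rewrite /Ilo /Ihi.
case: eqP => [l0|/eqP l0]; case: eqP => [lm'|/eqP lm'] //.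
- by rewrite l0 alpha1_gt0 //; lia.
- by have := alpham_lt; rewrite -lm'; lia.
- by apply: alpha_gap; lia.
Qed.

Lemma Ihi_le_n (l : nat) : (l <= m)%N -> (Ihi n m alpha l <= n)%N.
Proof.
move=> lm; rewrite /Ihi; case: eqP => [//|/eqP lm'].
have := @alpha_le l.+1 m; have := alpham_lt; lia.
Qed.

Lemma alpha_notin_I (l k L : nat) : (l <= m)%N ->
  (Ilo alpha l <= k < Ihi n m alpha l)%N -> (0 < L <= m)%N -> k != alpha L.
Proof.
move=> lm /andP[lok khi] /andP[L_gt0 Lm]; rewrite /Ilo /Ihi in lok khi.
have [Ll|lL] := leqP L l.
  have := @alpha_le L l; move: lok; case: eqP; lia.
have := @alpha_le l.+1 L; move: khi; case: eqP; lia.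
Qed.

Lemma x_lt (i j : nat) : (i < j <= n)%N -> x i < x j.
Proof.
move=> /andP[ij jn].
apply: (@homo_ltn_in R [pred k | k <= n]%N x (fun a b => a < b) lt_trans);
  rewrite ?inE ?jn ?(leq_trans (ltnW ij)) //.
- move=> a b _; rewrite inE => bn c /andP[_ cb].
  by rewrite inE (leq_trans (ltnW cb)).
- by move=> k _; rewrite inE; apply: x_incr.
Qed.

Lemma x_le (i j : nat) : (i <= j <= n)%N -> x i <= x j.
Proof.
rewrite leq_eqVlt => /andP[/orP[/eqP -> // | ij] jn].
by apply/ltW/x_lt; rewrite ij.
Qed.

Lemma gap_in_I_le_hmax (l k : nat) : (l <= m)%N ->
  (Ilo alpha l <= k < Ihi n m alpha l)%N -> x k.+1 - x k <= hmax x n m s.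
Proof.
move=> lm kI; have kn : (k < n)%N.
  by case/andP: kI => _ /leq_trans; apply; apply: Ihi_le_n.
apply: gap_le_hmax => // L /andP[L_gt0 Lm].
have [sL_gt sL_lt] := s_between L_gt0 Lm.
have alphaLn : (alpha L < n)%N.
  by have := @alpha_le L m L_gt0; have := alpham_lt; lia.
have : k != alpha L by apply: (@alpha_notin_I l k L lm kI); rewrite L_gt0 Lm.
rewrite neq_ltn => /orP[k_lt|k_gt]; apply/negP => /andP[xks sxk].
- have : x k.+1 <= x (alpha L) by apply: x_le; rewrite k_lt (ltnW alphaLn).
  lra.
- have : x (alpha L).+1 <= x k by apply: x_le; rewrite k_gt (ltnW kn).
  lra.
Qed.

Lemma hmin_in_r0_set :
  hmax x n m s <= hmin x n m alpha -> r0_set x n m alpha (hmin x n m alpha).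
Proof.
move=> hmax_le; set h := hmin x n m alpha.
have h_gt0 : 0 < h.
  by apply: hmin_gt0 => l lm; apply: x_lt; rewrite Ilo_lt_Ihi ?Ihi_le_n.
split; [exact: h_gt0 | split; [exact: lexx|]].
move=> y [l [lm [loy yhi]]].
set lo := x (Ilo alpha l) in loy *; set hi := x (Ihi n m alpha l) in yhi *.
have h_le : h <= hi - lo := hmin_le lm.
have [j /andP[loj jhi] /andP[yj jy]] :
    exists2 j, (Ilo alpha l <= j <= Ihi n m alpha l)%N & y - h <= x j <= y.
  apply: exists_node_near_below; [exact: ltW | exact/ltnW/Ilo_lt_Ihi | | by rewrite loy yhi].
  by move=> k kI; apply: le_trans (gap_in_I_le_hmax lm kI) hmax_le.
have jn : (j < n.+1)%N by rewrite ltnS (leq_trans jhi) ?Ihi_le_n.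
have lo_j : lo <= x j by apply: x_le; rewrite loj -ltnS jn.
pose c := Num.max lo (y - h).
have lo_c : lo <= c by rewrite /c le_max lexx.
have c_y : c <= y by rewrite /c ge_max loy /=; lra.
have c_hi : c + h <= hi by rewrite /c -lerBrDr ge_max; apply/andP; split; lra.
have c_j : c <= x j by rewrite /c ge_max lo_j.
have yh_c : y - h <= c by rewrite /c le_max lexx orbT.
exists c, (c + h); split; first lra.
split; first by move=> z [cz zd]; exists l; split=> //; rewrite -/lo -/hi; split; lra.
split; first by split; lra.
by apply/card_gt0P; exists (Ordinal jn); rewrite inE /=; apply/andP; split; lra.
Qed.

Lemma r0_set_ge (r : R) : r0_set x n m alpha r -> (x 1 - x 0) / 2 <= r.
Proof.
move=> [_ [_ covered]].
have x01 : x 0 < x 1 := x_incr n_gt0.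
have hi0_gt0 : (0 < Ihi n m alpha 0)%N := Ilo_lt_Ihi (leq0n m).
have x1_hi0 : x 1 <= x (Ihi n m alpha 0) by apply: x_le; rewrite hi0_gt0 Ihi_le_n.
have /covered [c [d [<- [_ [[cy yd] /card_gt0P[i]]]]]] :
    Iunion x n m alpha ((x 0 + x 1) / 2).
  by exists 0%N; split=> //; rewrite /Ilo /=; split; lra.
rewrite inE => /andP[ci id].
have [i0|i_gt0] := posnP i.
  by rewrite i0 in ci; lra.
have : x 1 <= x i by apply: x_le; rewrite i_gt0 -ltnS ltn_ord.
lra.
Qed.

End Intervals.

Theorem theorem1 (R : realType) (a b : R) (n m : nat) (x : nat -> R)
    (s : nat -> R) (alpha : nat -> nat) :
  a < b ->
  x 0%N = a -> x n = b ->
  (forall i : nat, (i < n)%N -> x i < x i.+1) ->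
  ((0 < m)%N -> (0 < alpha 1%N)%N) ->
  ((0 < m)%N -> (alpha m < n.-1)%N) ->
  (forall l : nat, (1 <= l)%N -> (l < m)%N -> ((alpha l).+1 < alpha l.+1)%N) ->
  (forall l : nat, (1 <= l)%N -> (l <= m)%N ->
     x (alpha l) < s l /\ s l < x (alpha l).+1) ->
  hmax x n m s <= hmin x n m alpha ->
  r0_set x n m alpha !=set0 /\ 0 < r0 x n m alpha.
Proof.
move=> ab x0 xn x_incr alpha1_gt0 alpham_lt alpha_gap s_between hmax_le.
have n_gt0 : (0 < n)%N.
  by rewrite lt0n; apply: contraTneq ab => n0; rewrite -x0 -xn n0 ltxx.
have r0_set_neq0 : r0_set x n m alpha !=set0.
  exists (hmin x n m alpha).
  exact: hmin_in_r0_set n_gt0 x_incr alpha1_gt0 alpham_lt alpha_gap s_between hmax_le.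
split=> //.
have r0_ge : (x 1%N - x 0%N) / 2 <= r0 x n m alpha.
  apply: lb_le_inf => // r.
  exact/(r0_set_ge n_gt0 x_incr alpha1_gt0 alpham_lt alpha_gap).
have x01 := x_incr 0%N n_gt0.
by apply: lt_le_trans r0_ge; lra.
Qed.
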